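(* Let $(X,d)$ be an $F$-space with non-decreasing metric $d$ and let $\mathcal{E}(x)=\{e_n(x)\}_{n=0}^\infty$ be a scale on $X$. Then $X_{\mathcal{E}}:=\{x\in X:\mathcal{E}(x)\in c_0\}$ is a closed vector subspace of $X$.
   Context: An $F$-space is a complete metric vector space with translation-invariant metric $d$; $d$ is non-decreasing if $d(\alpha x,0)\le d(x,0)$ for $0\le\alpha\le1$. Write $\|x\|=d(x,0)$. A map $\mathcal{E}:X\to\ell^\infty$, $\mathcal{E}(x)=\{e_n(x)\}_{n=0}^\infty$ with each $e_n:X\to[0,\infty)$, is a scale on $X$ if: (i) there is $C_1>0$ with $C_1\|x\|\ge e_n(x)\ge e_{n+1}(x)$ for all $x\in X$, $n\in\mathbb{N}$, and each $e_n$ is continuous; (ii) there exist a strictly increasing $K:\mathbb{N}\to\mathbb{N}$ and $C_2>0$ with $e_{K(n)}(x+y)\le C_2(e_n(x)+e_n(y))$ for all $x,y\in X$, $n\in\mathbb{N}$; (iii) there is a function $\phi:[0,\infty)\to[0,\infty)$ with $e_n(\lambda x)\le\phi(|\lambda|)e_n(x)$ for all scalars $\lambda$ and $x\in X$, and $e_n(-x)=e_n(x)$ for all $x$. $c_0$ denotes the space of sequences converging to $0$. *)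

From mathcomp Require Import all_boot all_order all_algebra.
From mathcomp Require Import reals.
Set Implicit Arguments. Unset Strict Implicit. Unset Printing Implicit Defensive.
Import Order.TTheory GRing.Theory Num.Theory.
Local Open Scope ring_scope.

Section FSpace.
Variables (R : realType) (V : lmodType R).

Definition is_metric (d : V -> V -> R) : Prop :=
  [/\ forall x y, 0 <= d x y,
      forall x y, d x y = 0 <-> x = y,
      forall x y, d x y = d y x &
      forall x y z, d x z <= d x y + d y z].

Definition d_cvg (d : V -> V -> R) (u : nat -> V) (l : V) : Prop :=
  forall eps : R, 0 < eps -> exists N : nat, forall n : nat, (N <= n)%N -> d (u n) l < eps.

Definition r_cvg (u : nat -> R) (l : R) : Prop :=
  forall eps : R, 0 < eps -> exists N : nat, forall n : nat, (N <= n)%N -> `|u n - l| < eps.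

Definition d_cauchy (d : V -> V -> R) (u : nat -> V) : Prop :=
  forall eps : R, 0 < eps -> exists N : nat,
    forall m n : nat, (N <= m)%N -> (N <= n)%N -> d (u m) (u n) < eps.

Definition is_Fspace (d : V -> V -> R) : Prop :=
  [/\ is_metric d,
      (forall x y z, d (x + z) (y + z) = d x y),
      (forall u, d_cauchy d u -> exists l, d_cvg d u l),
      (forall (u v : nat -> V) x y, d_cvg d u x -> d_cvg d v y ->
          d_cvg d (fun n => u n + v n) (x + y)) &
      (forall (a : nat -> R) (u : nat -> V) al x, r_cvg a al -> d_cvg d u x ->
          d_cvg d (fun n => a n *: u n) (al *: x))].

Definition nondecreasing_metric (d : V -> V -> R) : Prop :=
  forall (x : V) (a : R), 0 <= a -> a <= 1 -> d (a *: x) 0 <= d x 0.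

Definition d_continuous (d : V -> V -> R) (f : V -> R) : Prop :=
  forall x (eps : R), 0 < eps -> exists2 delta : R, 0 < delta &
    forall y, d y x < delta -> `|f y - f x| < eps.

(* scale E(x) = (e n x)_n on (V,d), with ||x|| = d x 0 *)
Definition is_scale (d : V -> V -> R) (e : nat -> V -> R) : Prop :=
  [/\ (forall n x, 0 <= e n x),
      (exists2 C1 : R, 0 < C1 &
         forall x n, e n x <= C1 * d x 0 /\ e n.+1 x <= e n x),
      (forall n, d_continuous d (e n)),
      (exists K : nat -> nat, exists2 C2 : R,
         (forall m n, (m < n)%N -> (K m < K n)%N) /\ 0 < C2 &
         forall x y n, e (K n) (x + y) <= C2 * (e n x + e n y)) &
      (exists phi : R -> R,
         (forall t, 0 <= t -> 0 <= phi t) /\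
         (forall (lam : R) x n, e n (lam *: x) <= phi `|lam| * e n x) /\
         (forall x n, e n (- x) = e n x))].

Definition X_E (e : nat -> V -> R) : V -> Prop :=
  fun x => r_cvg (fun n => e n x) 0.

Definition closed_subspace (d : V -> V -> R) (S : V -> Prop) : Prop :=
  [/\ S 0,
      (forall x y, S x -> S y -> S (x + y)),
      (forall (lam : R) x, S x -> S (lam *: x)) &
      (forall x, (forall eps : R, 0 < eps -> exists2 y, S y & d x y < eps) -> S x)].

End FSpace.

From mathcomp Require Import all_boot all_order all_algebra.
From mathcomp Require Import reals.
From mathcomp Require Import ring lra.
Import Order.TTheory GRing.Theory Num.Theory.
Local Open Scope ring_scope.

(* Since every sequence E(x) is nonnegative and nonincreasing, E(x) is in c_0 as
   soon as one term is small.  For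
   closedness, write x = (x - y) + y with y in X_E near x: by (i) and
   translation invariance e_n(x - y) <= C1 d(x, y), so by (ii) the term
   e_{K n}(x) is small once n is large for y. *)

Section ScaleSubspace.
Variables (R : realType) (V : lmodType R) (e : nat -> V -> R).
Hypotheses (e_ge0 : forall n x, 0 <= e n x) (e_nonincn : forall n x, e n.+1 x <= e n x).

Lemma e_antitone x m n : (m <= n)%N -> e n x <= e m x.
Proof. exact: (Order.NatMonotonyTheory.nonincnP (e_nonincn^~ x)). Qed.

Lemma X_EP x : X_E e x <-> forall eps : R, 0 < eps -> exists N, e N x < eps.
Proof.
split=> [Ex eps eps_gt0 | small eps eps_gt0].
  have [N EN] := Ex eps eps_gt0; exists N.
  by have := EN N (leqnn N); rewrite subr0 ger0_norm.
have [N eN] := small eps eps_gt0; exists N => n le_Nn.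
rewrite subr0 ger0_norm //; apply: le_lt_trans eN.
exact: e_antitone.
Qed.

Lemma X_E0 (d : V -> V -> R) (C1 : R) :
  (forall n x, e n x <= C1 * d x 0) -> d 0 0 = 0 -> X_E e 0.
Proof.
move=> e_le_norm d00; apply/X_EP => eps eps_gt0; exists 0%N.
by apply: le_lt_trans (e_le_norm 0%N 0) _; rewrite d00 mulr0.
Qed.

Section QuasiSubadditive.
Variables (K : nat -> nat) (C2 : R).
Hypotheses (C2_gt0 : 0 < C2)
  (e_quasi_add : forall x y n, e (K n) (x + y) <= C2 * (e n x + e n y)).

Lemma e_quasi_add_lt x y n eps :
  e n x < eps / (2 * C2) -> e n y < eps / (2 * C2) -> e (K n) (x + y) < eps.
Proof.
move=> ex ey; apply: le_lt_trans (e_quasi_add x y n) _.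
have -> : eps = C2 * (eps / (2 * C2) + eps / (2 * C2)).
  by field; rewrite gt_eqF.
by rewrite ltr_pM2l //; exact: ltrD.
Qed.

Lemma X_E_add x y : X_E e x -> X_E e y -> X_E e (x + y).
Proof.
move=> /X_EP small_x /X_EP small_y; apply/X_EP => eps eps_gt0.
have eps'_gt0 : 0 < eps / (2 * C2) by rewrite divr_gt0 ?mulr_gt0.
have [Nx eNx] := small_x _ eps'_gt0; have [Ny eNy] := small_y _ eps'_gt0.
exists (K (maxn Nx Ny)); apply: e_quasi_add_lt.
- by apply: le_lt_trans eNx; apply: e_antitone; exact: leq_maxl.
- by apply: le_lt_trans eNy; apply: e_antitone; exact: leq_maxr.
Qed.

Section Closure.
Variables (d : V -> V -> R) (C1 : R).
Hypotheses (C1_gt0 : 0 < C1) (e_le_norm : forall n x, e n x <= C1 * d x 0)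
  (d_translate : forall x y z, d (x + z) (y + z) = d x y).

Lemma X_E_closed x :
  (forall eps : R, 0 < eps -> exists2 y, X_E e y & d x y < eps) -> X_E e x.
Proof.
move=> approx; apply/X_EP => eps eps_gt0.
have eps'_gt0 : 0 < eps / (2 * C2) by rewrite divr_gt0 ?mulr_gt0.
have [y /X_EP small_y dxy] := approx _ (divr_gt0 eps'_gt0 C1_gt0).
have [N eNy] := small_y _ eps'_gt0; exists (K N).
rewrite -(subrK y x); apply: e_quasi_add_lt eNy.
apply: le_lt_trans (e_le_norm N (x - y)) _.
rewrite -(d_translate (x - y) 0 y) subrK add0r mulrC -ltr_pdivlMr //.
Qed.
End Closure.
End QuasiSubadditive.

Section Homogeneity.
Variable phi : R -> R.
Hypotheses (phi_ge0 : forall t, 0 <= t -> 0 <= phi t)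
  (e_scale_le : forall (lam : R) x n, e n (lam *: x) <= phi `|lam| * e n x).

Lemma X_E_scale lam x : X_E e x -> X_E e (lam *: x).
Proof.
move=> /X_EP small_x; apply/X_EP => eps eps_gt0.
have phi1_gt0 : 0 < phi `|lam| + 1 by have := @phi_ge0 _ (normr_ge0 lam); lra.
have [N eN] := small_x _ (divr_gt0 eps_gt0 phi1_gt0); exists N.
apply: le_lt_trans (e_scale_le lam x N) _.
apply: le_lt_trans (_ : _ <= (phi `|lam| + 1) * e N x) _.
  by rewrite mulrDl mul1r lerDl.
by rewrite mulrC -ltr_pdivlMr.
Qed.
End Homogeneity.
End ScaleSubspace.

Theorem mainTheorem6 (R : realType) (V : lmodType R) (d : V -> V -> R)
    (e : nat -> V -> R) :
  is_Fspace d -> nondecreasing_metric d -> is_scale d e ->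
  closed_subspace d (X_E e).
Proof.
move=> [[_ d_eq0 _ _] d_translate _ _ _] _.
move=> [e_ge0 [C1 C1_gt0 e_norm] _ [K [C2 [_ C2_gt0] e_quasi_add]]
        [phi [phi_ge0 [e_scale_le _]]]].
have e_nonincn n x : e n.+1 x <= e n x by case: (e_norm x n).
have e_le_norm n x : e n x <= C1 * d x 0 by case: (e_norm x n).
split.
- exact: X_E0 e_ge0 e_nonincn _ _ e_le_norm (proj2 (d_eq0 0 0) erefl).
- exact: X_E_add e_ge0 e_nonincn _ _ C2_gt0 e_quasi_add.
- exact: X_E_scale e_ge0 e_nonincn _ phi_ge0 e_scale_le.
- exact: X_E_closed e_ge0 e_nonincn _ _ C2_gt0 e_quasi_add _ _ C1_gt0
    e_le_norm d_translate.
Qed.
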